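(* Let $\mathcal E^{(-1)}=0$ and, for $q\in\mathbb Z_+$, $\mathcal E^{(q)}=\{X\in\mathfrak D_V\mid [D_\mu,X]\in\mathcal E^{(q-1)},\ \mu=1,\dots,m\}$. Then for every $q\in\mathbb Z_+$, $$\mathcal E^{(q)}=\bigoplus_{k\in\mathsf I,\ |k|\le q}\mathcal E^k,\qquad \mathcal E^k=\Big\{\sum_{\alpha,i}(\varepsilon^k_\phi)^\alpha_i\,\partial_{u^\alpha_i}\ \Big|\ \phi\in\mathcal A^{\mathsf A}\Big\};$$ that is, a vertical differentiation $X=\sum\zeta^\alpha_i\partial_{u^\alpha_i}$ lies in $\mathcal E^{(q)}$ if and only if $\zeta=\sum_{|k|\le q}\varepsilon^k_{\phi_k}$ for some $\phi_k\in\mathcal A^{\mathsf A}$, and these $\phi_k$ are unique.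
   Context: $\mathbb F\in\{\mathbb R,\mathbb C\}$, $m\in\mathbb N$, $\mathsf A$ a finite index set, $\mathsf I=\mathbb Z_+^m$, $|k|=k^1+\dots+k^m$, $k\le i$ componentwise, $\binom{i}{k}=\prod_\mu\binom{i^\mu}{k^\mu}$, $(\mu)$ the multi-index with $1$ in position $\mu$. Variables $x^\mu$ on $\mathbb R^m$ and $u^\alpha_i$ ($\alpha\in\mathsf A$, $i\in\mathsf I$); $\mathcal A$ is the algebra of smooth $\mathbb F$-valued functions each depending on finitely many of these variables. $D_\mu=\partial_{x^\mu}+\sum_{\alpha,i}u^\alpha_{i+(\mu)}\partial_{u^\alpha_i}$, $D_j=D_1^{j^1}\cdots D_m^{j^m}$. $\mathfrak D_V$ is the space of vertical differentiations $X=\sum_{\alpha,i}\zeta^\alpha_i\partial_{u^\alpha_i}$ with arbitrary coefficients $\zeta^\alpha_i\in\mathcal A$ (each acts on $f\in\mathcal A$ as a finite sum); one has $[D_\mu,X]=\sum(D_\mu\zeta^\alpha_i-\zeta^\alpha_{i+(\mu)})\partial_{u^\alpha_i}$. For $k\in\mathsf I$, $\phi=(\phi^\alpha)\in\mathcal A^{\mathsf A}$: $(\varepsilon^k_\phi)^\alpha_i=\binom{i}{k}D_{i-k}\phi^\alpha$ if $k\le i$ and $0$ otherwise. *)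

From Stdlib Require Import Reals ClassicalEpsilon.
From mathcomp Require Import all_boot.
Set Implicit Arguments. Unset Strict Implicit. Unset Printing Implicit Defensive.

Section Jet.
Variables (m : nat) (Aset : finType).

Definition MI := {ffun 'I_m -> nat}.
Definition mabs (i : MI) : nat := \sum_(mu < m) i mu.
Definition mle (k i : MI) : bool := [forall mu, k mu <= i mu].
Definition msub (i k : MI) : MI := [ffun mu => i mu - k mu].
Definition mshift (mu : 'I_m) (i : MI) : MI := [ffun nu => i nu + (nu == mu)].
Definition mbinom (i k : MI) : nat := \prod_(mu < m) 'C(i mu, k mu).

(* variables: x^mu (inl mu) and u^alpha_i (inr (alpha, i)) *)
Definition Var := ('I_m + (Aset * MI))%type.
Definition ord (v : Var) : nat :=
  match v with inl _ => 0 | inr (_, i) => mabs i end.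
Definition Point := Var -> R.
(* F-valued functions, F = C represented as R*R (real, imaginary part) *)
Definition Fn := Point -> (R * R)%type.

Definition upd (p : Point) (v : Var) (t : R) : Point :=
  fun w => if w == v then t else p w.

Definition depends_upto (n : nat) (f : Point -> R) : Prop :=
  forall p p' : Point, (forall v, ord v <= n -> p v = p' v) -> f p = f p'.

Definition cont_upto (n : nat) (f : Point -> R) : Prop :=
  forall (p : Point) (e : R), Rlt 0 e -> exists d : R, Rlt 0 d /\
    forall p' : Point, (forall v, ord v <= n -> Rlt (Rabs (Rminus (p' v) (p v))) d) ->
      Rlt (Rabs (Rminus (f p') (f p))) e.

Fixpoint Ck (n k : nat) (f : Point -> R) : Prop :=
  match k with
  | 0 => cont_upto n f
  | k'.+1 => cont_upto n f /\
      forall v : Var, exists g : Point -> R,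
        (forall p, derivable_pt_lim (fun t => f (upd p v t)) (p v) (g p)) /\
        Ck n k' g
  end.

Definition smooth_upto (n : nat) (f : Point -> R) : Prop :=
  depends_upto n f /\ forall k, Ck n k f.

(* the algebra A (F = R if cplx = false, F = C if cplx = true) *)
Definition inA (cplx : bool) (f : Fn) : Prop :=
  exists n, smooth_upto n (fun p => fst (f p)) /\
            smooth_upto n (fun p => snd (f p)) /\
            (cplx = false -> forall p, snd (f p) = R0).

(* derivative of a real function at a point (junk value 0 if none) *)
Definition Dlim (g : R -> R) (x : R) : R :=
  epsilon (inhabits R0) (fun l => derivable_pt_lim g x l).

(* total derivative D_mu = d/dx^mu + sum u^alpha_{i+(mu)} d/du^alpha_i,
   as the directional derivative along the vector field it defines *)
Definition wvec (mu : 'I_m) (p : Point) : Point :=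
  fun v => match v with
           | inl nu => if nu == mu then R1 else R0
           | inr (a, i) => p (inr (a, mshift mu i))
           end.
Definition Dtot (mu : 'I_m) (f : Fn) : Fn :=
  fun p => (Dlim (fun t => fst (f (fun v => Rplus (p v) (Rmult t (wvec mu p v))))) R0,
            Dlim (fun t => snd (f (fun v => Rplus (p v) (Rmult t (wvec mu p v))))) R0).

Definition Dj (j : MI) (f : Fn) : Fn :=
  foldr (fun mu g => iter (j mu) (Dtot mu) g) f (enum 'I_m).

Definition zeroF : Fn := fun _ => (R0, R0).
Definition addF (f g : Fn) : Fn :=
  fun p => (Rplus (fst (f p)) (fst (g p)), Rplus (snd (f p)) (snd (g p))).
Definition subF (f g : Fn) : Fn :=
  fun p => (Rminus (fst (f p)) (fst (g p)), Rminus (snd (f p)) (snd (g p))).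
Definition nmulF (n : nat) (f : Fn) : Fn :=
  fun p => (Rmult (INR n) (fst (f p)), Rmult (INR n) (snd (f p))).
Definition sumF (s : seq Fn) : Fn := foldr addF zeroF s.

(* coefficient families zeta^alpha_i of vertical differentiations *)
Definition VF := Aset -> MI -> Fn.
Definition inDV (cplx : bool) (z : VF) : Prop := forall a i, inA cplx (z a i).

(* coefficients of [D_mu, X] *)
Definition commD (mu : 'I_m) (z : VF) : VF :=
  fun a i => subF (Dtot mu (z a i)) (z a (mshift mu i)).

Definition eps (k : MI) (phi : Aset -> Fn) : VF :=
  fun a i => if mle k i then nmulF (mbinom i k) (Dj (msub i k) (phi a))
             else zeroF.

(* Eshift q = E^{(q-1)}; Eshift 0 = E^{(-1)} = 0 *)
Fixpoint Eshift (cplx : bool) (q : nat) (z : VF) : Prop :=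
  match q with
  | 0 => forall a i p, z a i p = (R0, R0)
  | q'.+1 => inDV cplx z /\ forall mu, Eshift cplx q' (commD mu z)
  end.
Definition Ecal (cplx : bool) (q : nat) (z : VF) : Prop := Eshift cplx q.+1 z.

Definition mis (q : nat) : seq MI :=
  map (fun k : {ffun 'I_m -> 'I_q.+1} => [ffun mu => nat_of_ord (k mu)] : MI)
      (filter (fun k : {ffun 'I_m -> 'I_q.+1} => \sum_(mu < m) nat_of_ord (k mu) <= q)
              (enum {ffun 'I_m -> 'I_q.+1})).

Definition sumEps (q : nat) (phi : MI -> Aset -> Fn) : VF :=
  fun a i => sumF [seq eps k (phi k) a i | k <- mis q].

End Jet.

(* The commutator [D_mu, -] acts on the families eps^k_phi by
   [D_mu, eps^k_phi] = - eps^(k - (mu))_phi, and by 0 when k^mu = 0: this is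
   Pascal's rule for the multinomial coefficients together with
   D_mu D_j = D_(j + (mu)), i.e. the commutation of the total derivatives.
   By induction on |k|, eps^k_phi lies in E^(|k|), hence so does every sum over
   |k| <= q.  Conversely, the coefficient of index i of such a sum is phi_i plus
   terms involving only the phi_l with l < i.  This triangularity gives
   uniqueness, and lets one choose the phi_k by recursion on |k| so that the sum
   agrees with a given X in E^(q) at all orders <= q; the difference lies in
   E^(q) and vanishes, because [D_mu, Y] = 0 forces Y_(i + (mu)) = D_mu Y_i.
   On the analytic side, D_mu f is the derivative of f along the line
   p + t w_mu(p): the chain rule for functions of finitely many variables with
   continuous partial derivatives writes it as sum_v w_mu^v d_v f, and Schwarz's
   theorem makes D_mu and D_nu commute. *)

From HB Require Import structures.
From Pilot Require Import Defs.
From Stdlib Require Import Reals Lra FunctionalExtensionality ClassicalEpsilon.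
From Coquelicot Require Derive Derive_2d.
From mathcomp Require Import all_boot zify.
Set Implicit Arguments. Unset Strict Implicit. Unset Printing Implicit Defensive.

HB.instance Definition _ := Monoid.isComLaw.Build R R0 Rplus
  (fun x y z => esym (Rplus_assoc x y z)) Rplus_comm Rplus_0_l.
HB.instance Definition _ := Monoid.isComLaw.Build R R1 Rmult
  (fun x y z => esym (Rmult_assoc x y z)) Rmult_comm Rmult_1_l.
HB.instance Definition _ := Monoid.isMulLaw.Build R R0 Rmult Rmult_0_l Rmult_0_r.
HB.instance Definition _ :=
  Monoid.isAddLaw.Build R Rmult Rplus Rmult_plus_distr_r Rmult_plus_distr_l.

Local Notation "\sum_ ( i <- r ) F" := (\big[Rplus/R0]_(i <- r) F) : R_scope.

Section RealFacts.
Local Open Scope R_scope.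

Lemma DlimE (g : R -> R) x l : derivable_pt_lim g x l -> Dlim g x = l.
Proof.
move=> gl; have ex : exists l, derivable_pt_lim g x l by exists l.
exact: uniqueness_limite (epsilon_spec (inhabits R0) _ ex) gl.
Qed.

Lemma Dlim_const c x : Dlim (fun _ => c) x = 0.
Proof. exact/DlimE/derivable_pt_lim_const. Qed.

Lemma Rmult_close x0 y0 e : 0 < e -> exists d, 0 < d /\ forall x y,
  Rabs (x - x0) < d -> Rabs (y - y0) < d -> Rabs (x * y - x0 * y0) < e.
Proof.
move=> e_gt0; set M := 1 + Rabs x0 + Rabs y0.
have M_gt0 : 0 < M by have := Rabs_pos x0; have := Rabs_pos y0; rewrite /M; lra.
set d := Rmin 1 (e / M).
have d_gt0 : 0 < d by apply: Rmin_pos; [lra | apply: Rdiv_lt_0_compat].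
have dM : d * M <= e.
  apply: (Rle_trans _ (e / M * M)); first by apply: Rmult_le_compat_r; [lra | apply: Rmin_r].
  by right; field; lra.
exists d; split=> // x y dx dy; have d1 : d <= 1 by apply: Rmin_l.
have -> : x * y - x0 * y0 = (x - x0) * (y - y0) + x0 * (y - y0) + y0 * (x - x0) by ring.
have := Rabs_triang ((x - x0) * (y - y0) + x0 * (y - y0)) (y0 * (x - x0)).
have := Rabs_triang ((x - x0) * (y - y0)) (x0 * (y - y0)).
rewrite !Rabs_mult /M in dM *.
have := Rabs_pos (x - x0); have := Rabs_pos (y - y0).
have := Rabs_pos x0; have := Rabs_pos y0; nra.
Qed.

Lemma Rplus_close x0 y0 e : 0 < e -> exists d, 0 < d /\ forall x y,
  Rabs (x - x0) < d -> Rabs (y - y0) < d -> Rabs (x + y - (x0 + y0)) < e.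
Proof.
move=> e_gt0; exists (e / 2); split=> [|x y dx dy]; first lra.
have -> : x + y - (x0 + y0) = x - x0 + (y - y0) by ring.
have := Rabs_triang (x - x0) (y - y0); lra.
Qed.

Lemma Rabs_mul_add_lt b x y e :
  Rabs x < e / 2 / (Rabs b + 1) -> Rabs y < e / 2 -> Rabs (b * x + y) < e.
Proof.
move=> xe ye; have b_ge0 := Rabs_pos b.
have : Rabs b * Rabs x <= Rabs b * (e / 2 / (Rabs b + 1)).
  by apply: Rmult_le_compat_l; [apply: Rabs_pos | lra].
have : Rabs b * (e / 2 / (Rabs b + 1)) < e / 2.
  rewrite (_ : Rabs b * (e / 2 / (Rabs b + 1)) = e / 2 - e / 2 / (Rabs b + 1)); last by field; lra.
  suff : 0 < e / 2 / (Rabs b + 1) by lra.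
  by apply: Rdiv_lt_0_compat; have := Rabs_pos y; lra.
have := Rabs_triang (b * x) y; rewrite Rabs_mult; lra.
Qed.

Lemma sum_ge0 (T : Type) (s : seq T) (F : T -> R) :
  (forall x, 0 <= F x) -> 0 <= \sum_(x <- s) F x.
Proof. by move=> F_ge0; apply: big_ind => [|x y|x _]; [lra | lra | apply: F_ge0]. Qed.

Lemma term_le_sum (T : eqType) (s : seq T) (F : T -> R) x :
  (forall y, 0 <= F y) -> x \in s -> F x <= \sum_(y <- s) F y.
Proof.
move=> F_ge0; elim: s => // y s IHs; rewrite inE big_cons => /orP[/eqP-> | xs].
  by have := sum_ge0 s F_ge0; lra.
by have := IHs xs; have := F_ge0 y; lra.
Qed.

Lemma derivable_pt_lim_sum (T : eqType) (s : seq T) (F : T -> R -> R) (F' : T -> R) x :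
  (forall y, y \in s -> derivable_pt_lim (F y) x (F' y)) ->
  derivable_pt_lim (fun t => \sum_(y <- s) F y t) x (\sum_(y <- s) F' y).
Proof.
elim: s => [|y s IHs] Fs.
  by under [fun t => _]functional_extensionality do rewrite big_nil;
    rewrite big_nil; apply: derivable_pt_lim_const.
under [fun t => _]functional_extensionality do rewrite big_cons.
rewrite big_cons; apply: (derivable_pt_lim_plus (F y) (fun t => \sum_(z <- s) F z t)).
  by apply: Fs; rewrite mem_head.
by apply: IHs => z zs; apply: Fs; rewrite inE zs orbT.
Qed.

Lemma MVT_increment (phi phi' : R -> R) a b :
  (forall c, derivable_pt_lim phi c (phi' c)) ->
  exists c, Rabs (c - a) <= Rabs (b - a) /\ phi b - phi a = phi' c * (b - a).
Proof.
move=> phi_der; have [ab|[<-|ba]] := Rtotal_order a b.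
- have [c [E ac]] := MVT_cor2 phi phi' a b ab (fun c _ => phi_der c).
  by exists c; split=> //; rewrite !Rabs_right; lra.
- by exists a; rewrite Rminus_diag Rabs_R0; split; [lra | ring].
- have [c [E bc]] := MVT_cor2 phi phi' b a ba (fun c _ => phi_der c).
  by exists c; split; [rewrite Rabs_left1 ?Rabs_left; lra | lra].
Qed.

Lemma Derive_derivable (g : R -> R) x l : derivable_pt_lim g x l -> Derive.Derive g x = l.
Proof. by move=> gl; apply/Derive.is_derive_unique/Derive.is_derive_Reals. Qed.

Lemma schwarz_2d (F F1 F2 F12 F21 : R -> R -> R) x y :
  (forall s t, derivable_pt_lim (F^~ t) s (F1 s t)) ->
  (forall s t, derivable_pt_lim (F s) t (F2 s t)) ->
  (forall s t, derivable_pt_lim (F1 s) t (F12 s t)) ->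
  (forall s t, derivable_pt_lim (F2^~ t) s (F21 s t)) ->
  Continuity.continuity_2d_pt F12 x y -> Continuity.continuity_2d_pt F21 x y ->
  F12 x y = F21 x y.
Proof.
move=> dF1 dF2 dF12 dF21 F12c F21c.
have DF1 s : (fun t => Derive.Derive (fun s => F s t) s) = F1 s.
  by apply: functional_extensionality => t; apply: Derive_derivable.
have DF2 t : (fun s => Derive.Derive (fun t => F s t) t) = F2^~ t.
  by apply: functional_extensionality => s; apply: Derive_derivable.
have E12 : (fun s t => Derive.Derive (fun t => Derive.Derive (fun s => F s t) s) t) = F12.
  by do 2!apply: functional_extensionality => ?; rewrite DF1; apply: Derive_derivable.
have E21 : (fun s t => Derive.Derive (fun s => Derive.Derive (fun t => F s t) t) s) = F21.
  by do 2!apply: functional_extensionality => ?; rewrite DF2; apply: Derive_derivable.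
have ex_der g s l : derivable_pt_lim g s l ->
    @Derive.ex_derive Hierarchy.R_AbsRing Hierarchy.R_NormedModule g s.
  by move=> gl; exists l; apply/Derive.is_derive_Reals.
move: (congr1 (fun G => G x y) E12) (congr1 (fun G => G x y) E21) => /= <- <-.
symmetry; apply: Derive_2d.Schwarz; rewrite ?E12 ?E21 //.
exists (mkposreal _ Rlt_0_1) => s t _ _; rewrite DF1 DF2.
by split; [|split; [|split]]; apply: ex_der.
Qed.

End RealFacts.

Section Smooth.
Variables (m : nat) (Aset : finType).
Local Notation Pt := (Point m Aset).
Local Notation V := (Defs.Var m Aset).
Implicit Types (f g : Pt -> R) (p : Pt) (u v w : V).
Local Open Scope R_scope.

Definition has_partial v f g : Prop :=
  forall p, derivable_pt_lim (fun t => f (upd p v t)) (p v) (g p).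
Definition Pd v f : Pt -> R := fun p => Dlim (fun t => f (upd p v t)) (p v).

Lemma has_partial_Pd v f g : has_partial v f g -> Pd v f = g.
Proof. by move=> fg; apply: functional_extensionality => p; apply: DlimE. Qed.

Lemma upd_id p v : upd p v (p v) = p.
Proof. by apply: functional_extensionality => w; rewrite /upd; case: eqP => [->|]. Qed.

Lemma upd_eq p v t : upd p v t v = t.
Proof. by rewrite /upd eqxx. Qed.

Lemma upd_upd p v s t : upd (upd p v s) v t = upd p v t.
Proof. by apply: functional_extensionality => w; rewrite /upd; case: eqP. Qed.

Lemma updC p u v x y : u != v -> upd (upd p u x) v y = upd (upd p v y) u x.
Proof.
move=> uv; apply: functional_extensionality => w; rewrite /upd.
case: (w =P v) => [wv|_]; case: (w =P u) => [wu|_] //.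
by move: uv; rewrite -wu -wv eqxx.
Qed.

Lemma has_partial_at v f g q s :
  has_partial v f g -> derivable_pt_lim (fun t => f (upd q v t)) s (g (upd q v s)).
Proof.
move=> /(_ (upd q v s)); rewrite upd_eq.
suff -> : (fun t => f (upd (upd q v s) v t)) = (fun t => f (upd q v t)) by [].
by apply: functional_extensionality => t; rewrite upd_upd.
Qed.

Lemma cont_upto_const n c : cont_upto n (fun _ : Pt => c).
Proof. by move=> p e e_gt0; exists 1; split=> [|p' _]; rewrite ?Rminus_diag ?Rabs_R0; lra. Qed.

Lemma cont_upto_coord n w : (ord w <= n)%N -> cont_upto n (fun p => p w).
Proof. by move=> wn p e e_gt0; exists e; split=> // p'; apply. Qed.

Lemma cont_upto_mono n n' f : (n <= n')%N -> cont_upto n f -> cont_upto n' f.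
Proof.
move=> nn' fc p e /(fc p)[d [d_gt0 fd]]; exists d; split=> // p' p'd.
by apply: fd => v vn; apply/p'd/(leq_trans vn nn').
Qed.

Lemma cont_upto_binop (op : R -> R -> R) n f g :
  (forall x0 y0 e, 0 < e -> exists d, 0 < d /\ forall x y,
     Rabs (x - x0) < d -> Rabs (y - y0) < d -> Rabs (op x y - op x0 y0) < e) ->
  cont_upto n f -> cont_upto n g -> cont_upto n (fun p => op (f p) (g p)).
Proof.
move=> op_cont fc gc p e /(op_cont (f p) (g p))[d [d_gt0 opd]].
have [d1 [d1_gt0 fd]] := fc p d d_gt0; have [d2 [d2_gt0 gd]] := gc p d d_gt0.
exists (Rmin d1 d2); split=> [|p' p'd]; first exact: Rmin_pos.
apply: opd; [apply: fd | apply: gd] => v /p'd/Rlt_le_trans; apply.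
  exact: Rmin_l.
exact: Rmin_r.
Qed.

Lemma cont_upto_add n f g :
  cont_upto n f -> cont_upto n g -> cont_upto n (fun p => f p + g p).
Proof. exact: (@cont_upto_binop Rplus n f g Rplus_close). Qed.

Lemma cont_upto_mul n f g :
  cont_upto n f -> cont_upto n g -> cont_upto n (fun p => f p * g p).
Proof. exact: (@cont_upto_binop Rmult n f g Rmult_close). Qed.

Lemma Ck_partial n k f v : Ck n k.+1 f -> has_partial v f (Pd v f) /\ Ck n k (Pd v f).
Proof. by move=> [_ /(_ v)[g [fg gk]]]; rewrite (has_partial_Pd fg). Qed.

Lemma Ck_succ n k f : Ck n k.+1 f -> Ck n k f.
Proof.
elim: k f => [|k IHk] f /=; first by case.
move=> [fc fd]; split=> // v; have [g [fg gk]] := fd v.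
by exists g; split=> //; apply: IHk.
Qed.

Lemma Ck_mono n n' k f : (n <= n')%N -> Ck n k f -> Ck n' k f.
Proof.
move=> nn'; elim: k f => [|k IHk] f /=; first exact: cont_upto_mono.
move=> [fc fd]; split=> [|v]; first exact: cont_upto_mono fc.
by have [g [fg gk]] := fd v; exists g; split=> //; apply: IHk.
Qed.

Lemma Ck_const n k c : Ck n k (fun _ : Pt => c).
Proof.
elim: k c => [|k IHk] c /=; first exact: cont_upto_const.
split=> [|v]; first exact: cont_upto_const.
by exists (fun _ => 0); split=> [p|]; [apply: derivable_pt_lim_const | apply: IHk].
Qed.

Lemma has_partial_coord v w :
  has_partial v (fun p => p w) (fun _ => if w == v then 1 else 0).
Proof.
move=> p; rewrite /upd; case: eqP => _.
  exact: derivable_pt_lim_id.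
exact: derivable_pt_lim_const.
Qed.

Lemma Ck_coord n k w : (ord w <= n)%N -> Ck n k (fun p => p w).
Proof.
move=> wn; case: k => [|k] /=; first exact: cont_upto_coord.
split=> [|v]; first exact: cont_upto_coord.
exists (fun _ => if w == v then 1 else 0); split; [exact: has_partial_coord | exact: Ck_const].
Qed.

Lemma Ck_add n k f g : Ck n k f -> Ck n k g -> Ck n k (fun p => f p + g p).
Proof.
elim: k f g => [|k IHk] f g /=; first exact: cont_upto_add.
move=> [fc fd] [gc gd]; split=> [|v]; first exact: cont_upto_add.
have [f' [ff' f'k]] := fd v; have [g' [gg' g'k]] := gd v.
exists (fun p => f' p + g' p); split; last exact: IHk.
by move=> p; apply: derivable_pt_lim_plus.
Qed.

Lemma Ck_mul n k f g : Ck n k f -> Ck n k g -> Ck n k (fun p => f p * g p).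
Proof.
elim: k f g => [|k IHk] f g /=; first exact: cont_upto_mul.
move=> [fc fd] [gc gd]; split=> [|v]; first exact: cont_upto_mul.
have [f' [ff' f'k]] := fd v; have [g' [gg' g'k]] := gd v.
exists (fun p => f' p * g p + f p * g' p); split.
  move=> p; have := derivable_pt_lim_mult _ _ _ _ _ (ff' p) (gg' p).
  by rewrite upd_id.
by apply: Ck_add; apply: IHk => //; apply: Ck_succ; split.
Qed.

Lemma smooth_mono n n' f : (n <= n')%N -> smooth_upto n f -> smooth_upto n' f.
Proof.
move=> nn' [fdep fC]; split=> [p p' pp'|k]; last exact: Ck_mono (fC k).
by apply: fdep => v vn; apply/pp'/(leq_trans vn nn').
Qed.

Lemma smooth_const n c : smooth_upto n (fun _ : Pt => c).
Proof. by split=> [//|k]; apply: Ck_const. Qed.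

Lemma smooth_coord n w : (ord w <= n)%N -> smooth_upto n (fun p => p w).
Proof. by move=> wn; split=> [p p'|k]; [apply | apply: Ck_coord]. Qed.

Lemma smooth_add n f g :
  smooth_upto n f -> smooth_upto n g -> smooth_upto n (fun p => f p + g p).
Proof.
move=> [fdep fC] [gdep gC]; split=> [p p' pp'|k]; last exact: Ck_add.
by rewrite (fdep p p' pp') (gdep p p' pp').
Qed.

Lemma smooth_mul n f g :
  smooth_upto n f -> smooth_upto n g -> smooth_upto n (fun p => f p * g p).
Proof.
move=> [fdep fC] [gdep gC]; split=> [p p' pp'|k]; last exact: Ck_mul.
by rewrite (fdep p p' pp') (gdep p p' pp').
Qed.

Lemma smooth_sum (T : eqType) n (s : seq T) (F : T -> Pt -> R) :
  (forall x, x \in s -> smooth_upto n (F x)) ->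
  smooth_upto n (fun p => \sum_(x <- s) F x p).
Proof.
elim: s => [|x s IHs] Fs.
  by under [fun p => _]functional_extensionality do rewrite big_nil; apply: smooth_const.
under [fun p => _]functional_extensionality do rewrite big_cons.
apply: smooth_add; first by apply: Fs; rewrite mem_head.
by apply: IHs => y ys; apply: Fs; rewrite inE ys orbT.
Qed.

Lemma Pd_high n f v : depends_upto n f -> (n < ord v)%N -> Pd v f = fun _ => 0.
Proof.
move=> fdep nv; apply: functional_extensionality => p; rewrite /Pd.
have -> : (fun t => f (upd p v t)) = (fun _ => f p); last exact: Dlim_const.
apply: functional_extensionality => t; apply: fdep => w wn; rewrite /upd.
by case: eqP => // wv; move: nv; rewrite -wv ltnNge wn.
Qed.

Lemma smooth_partial n f v :
  smooth_upto n f -> has_partial v f (Pd v f) /\ smooth_upto n (Pd v f).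
Proof.
move=> [fdep fC]; have [fv _] := Ck_partial v (fC 1%N).
split=> //; split=> [p p' pp'|k]; last by have [] := Ck_partial v (fC k.+1).
have [vn|nv] := leqP (ord v) n; last by rewrite (Pd_high fdep nv).
rewrite /Pd (pp' v vn); congr Dlim; apply: functional_extensionality => t.
by apply: fdep => w wn; rewrite /upd; case: eqP => // _; apply: pp'.
Qed.

End Smooth.

Section MultiIndex.
Variable m : nat.
Local Notation MI := (MI m).
Implicit Types (i j k : MI) (mu nu : 'I_m).

Definition mdec mu k : MI := [ffun nu => k nu - (nu == mu)].

Lemma mleP k i : reflect (forall mu, k mu <= i mu) (mle k i).
Proof. exact: forallP. Qed.

Lemma mle_refl i : mle i i.
Proof. by apply/mleP. Qed.

Lemma coord_le_mabs k mu : k mu <= mabs k.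
Proof. by rewrite /mabs (bigD1 mu) //= leq_addr. Qed.

Lemma mabs_shift mu i : mabs (mshift mu i) = (mabs i).+1.
Proof.
rewrite /mabs (bigD1 mu) //= [in RHS](bigD1 mu) //= ffunE eqxx addn1 addSn.
by congr (_.+1 + _); apply: eq_bigr => nu /negbTE nu_mu; rewrite ffunE nu_mu addn0.
Qed.

Lemma mabs_dec k mu : 0 < k mu -> mabs k = (mabs (mdec mu k)).+1.
Proof.
move=> k_gt0; rewrite /mabs (bigD1 mu) //= [in RHS](bigD1 mu) //= ffunE eqxx.
have -> : \sum_(nu < m | nu != mu) mdec mu k nu = \sum_(nu < m | nu != mu) k nu.
  by apply: eq_bigr => nu /negbTE nu_mu; rewrite ffunE nu_mu subn0.
by rewrite subn1 -addSn prednK.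
Qed.

Lemma mabs_gt0_coord i : 0 < mabs i -> exists mu, 0 < i mu.
Proof.
move=> i_gt0; apply/existsP; move: i_gt0; apply: contraLR; rewrite negb_exists => /forallP i0.
by rewrite -leqNgt leqn0 /mabs; apply/eqP/big1 => mu _; apply/eqP; rewrite -leqn0 leqNgt i0.
Qed.

Lemma mshiftC mu nu i : mshift mu (mshift nu i) = mshift nu (mshift mu i).
Proof. by apply/ffunP => x; rewrite !ffunE -!addnA [(_ == nu) + _]addnC. Qed.

Lemma mdecK mu i : 0 < i mu -> mshift mu (mdec mu i) = i.
Proof.
move=> i_gt0; apply/ffunP => nu; rewrite !ffunE.
by case: (nu =P mu) => [->|_] /=; lia.
Qed.

Lemma mle_shift k i mu : mle k i -> mle k (mshift mu i).
Proof. by move/mleP=> ki; apply/mleP => nu; rewrite ffunE (leq_trans (ki nu)) ?leq_addr. Qed.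

Lemma mle_dec k i mu : mle (mdec mu k) i = mle k (mshift mu i).
Proof. by apply/mleP/mleP => ki nu; have := ki nu; rewrite !ffunE; case: (nu =P mu); lia. Qed.

Lemma mle_shift0 k i mu : k mu = 0 -> mle k (mshift mu i) = mle k i.
Proof.
move=> k0; apply/mleP/mleP => ki nu; have := ki nu;
  by rewrite ?ffunE; case: (nu =P mu) => [->|]; lia.
Qed.

Lemma mle_mabs_lt k i : mle k i -> k != i -> mabs k < mabs i.
Proof.
move=> /mleP ki; apply: contraNT; rewrite -leqNgt => ik; apply/eqP/ffunP => mu.
apply/eqP; rewrite eqn_leq ki /=; move: ik.
rewrite /mabs (bigD1 mu) //= [X in _ <= X](bigD1 mu) //= => ik.
have : \sum_(nu < m | nu != mu) k nu <= \sum_(nu < m | nu != mu) i nu.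
  by apply: leq_sum => nu _; apply: ki.
by move=> ks; rewrite -(leq_add2r (\sum_(nu < m | nu != mu) i nu)) (leq_trans ik) ?leq_add2l.
Qed.

Lemma msub_shift k i mu : mle k i -> msub (mshift mu i) k = mshift mu (msub i k).
Proof. by move/mleP=> ki; apply/ffunP => nu; rewrite !ffunE; have := ki nu; lia. Qed.

Lemma msub_dec k i mu :
  0 < k mu -> mle k (mshift mu i) -> msub i (mdec mu k) = msub (mshift mu i) k.
Proof.
move=> k_gt0 /mleP ki; apply/ffunP => nu; rewrite !ffunE.
by have := ki nu; rewrite ffunE; case: (nu =P mu) => [->|]; lia.
Qed.

Lemma msubii i : msub i i = [ffun _ => 0].
Proof. by apply/ffunP => mu; rewrite !ffunE subnn. Qed.

Lemma mbinomii i : mbinom i i = 1.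
Proof. by apply: big1 => mu _; apply: binn. Qed.

Lemma mbinom_small k i : ~~ mle k i -> mbinom i k = 0.
Proof.
move=> ki; have [nu ik] : exists nu, i nu < k nu.
  by apply/existsP; apply: contraNT ki => /existsPn ik; apply/mleP => nu; rewrite leqNgt ik.
by rewrite /mbinom (bigD1 nu) //= bin_small.
Qed.

Lemma mbinom_pascal k i mu :
  0 < k mu -> mbinom (mshift mu i) k = mbinom i k + mbinom i (mdec mu k).
Proof.
move=> k_gt0; rewrite /mbinom (bigD1 mu) //= [X in _ = X + _](bigD1 mu) //=.
rewrite [X in _ = _ + X](bigD1 mu) //= !ffunE eqxx addn1 -(prednK k_gt0) binS subn1 /=.
rewrite mulnDl; congr (_ * _ + _ * _); apply: eq_bigr => nu /negbTE nu_mu;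
  by rewrite /mshift /mdec !ffunE nu_mu ?addn0 ?subn0.
Qed.

Lemma mbinom_shift0 k i mu : k mu = 0 -> mbinom (mshift mu i) k = mbinom i k.
Proof.
move=> k0; apply: eq_bigr => nu _; rewrite ffunE.
by case: (nu =P mu) => [->|_]; rewrite ?k0 ?bin0 ?addn0.
Qed.

Lemma mem_mis q k : (k \in mis m q) = (mabs k <= q).
Proof.
apply/mapP/idP => [[kk] | kq].
  by rewrite mem_filter => /andP[kkq _] ->; rewrite /mabs; under eq_bigr do rewrite ffunE.
have kmu_lt mu : k mu < q.+1 by rewrite ltnS (leq_trans (coord_le_mabs k mu)).
exists [ffun mu => Ordinal (kmu_lt mu)]; last by apply/ffunP => mu; rewrite !ffunE.
by rewrite mem_filter mem_enum andbT; under eq_bigr do rewrite ffunE.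
Qed.

Lemma uniq_mis q : uniq (mis m q).
Proof.
rewrite map_inj_uniq; first by rewrite filter_uniq // enum_uniq.
move=> k1 k2 /ffunP k12.
by apply/ffunP => mu; apply: val_inj; have := k12 mu; rewrite !ffunE.
Qed.

End MultiIndex.

Section Coordinates.
Variables (m : nat) (Aset : finType).
Local Notation V := (Defs.Var m Aset).

Definition vars_upto (N : nat) : seq V :=
  [seq inl mu | mu <- enum 'I_m] ++ [seq inr (a, i) | a <- enum Aset, i <- mis m N].

Lemma mem_vars_upto N (v : V) : (v \in vars_upto N) = (ord v <= N).
Proof.
rewrite mem_cat; case: v => [mu|[a i]] /=; first by rewrite (map_f _ (mem_enum _ mu)).
have /negbTE -> : inr (a, i) \notin [seq inl mu : V | mu <- enum 'I_m] by apply/mapP => -[].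
apply/allpairsP/idP => [[[b j] /= [_ jN [_ ->]]] | iN]; first by rewrite -mem_mis.
by exists (a, i); rewrite mem_enum mem_mis.
Qed.

Lemma uniq_vars_upto N : uniq (vars_upto N).
Proof.
rewrite cat_uniq map_inj_uniq ?enum_uniq; last by move=> x y [].
rewrite allpairs_uniq ?enum_uniq ?uniq_mis ?andbT //; last by move=> [? ?] [? ?] _ _ [-> ->].
by apply/hasPn => _ /allpairsP[[b j] /= [_ _ ->]]; apply/mapP => -[].
Qed.

End Coordinates.

Section TotalDerivative.
Variables (m : nat) (Aset : finType).
Local Notation Pt := (Point m Aset).
Local Notation V := (Defs.Var m Aset).
Local Notation vars := (vars_upto m Aset).
Implicit Types (f g : Pt -> R) (p q w : Pt) (u v : V).
Local Open Scope R_scope.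

Lemma increment_partial v f q x : has_partial v f (Pd v f) ->
  exists c, Rabs (c - q v) <= Rabs (x - q v) /\
            f (upd q v x) - f q = Pd v f (upd q v c) * (x - q v).
Proof.
move=> fv; have [c [cx fc]] := MVT_increment (q v) x (fun c => has_partial_at q c fv).
by exists c; rewrite upd_id in fc.
Qed.

Lemma cont_upto_uniform n g p M : cont_upto n g -> 0 <= M ->
  forall e, 0 < e -> exists d, 0 < d /\ forall h p', Rabs h < d ->
    (forall u, Rabs (p' u - p u) <= Rabs h * M) -> Rabs (g p' - g p) < e.
Proof.
move=> gc M_ge0 e /(gc p)[d [d_gt0 gd]].
exists (d / (M + 1)); split=> [|h p' hd p'p]; first by apply: Rdiv_lt_0_compat; lra.
have hM : Rabs h * (M + 1) < d.
  rewrite [X in _ < X](_ : d = d / (M + 1) * (M + 1)); last by field; lra.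
  by apply: Rmult_lt_compat_r; lra.
apply: gd => u _; apply: (Rle_lt_trans _ _ _ (p'p u)).
by have := Rabs_pos h; nra.
Qed.

Definition shift_on (L : seq V) p t w : Pt :=
  fun u => if u \in L then p u + t * w u else p u.

Lemma shift_on0 L p w : shift_on L p 0 w = p.
Proof. by apply: functional_extensionality => u; rewrite /shift_on; case: ifP => _ //; ring. Qed.

Lemma shift_on_cons L v p h w : v \notin L ->
  shift_on (v :: L) p h w = upd (shift_on L p h w) v (p v + h * w v).
Proof.
move=> vL; apply: functional_extensionality => u; rewrite /shift_on /upd inE.
by case: eqP => [->|] //=; rewrite (negbTE vL).
Qed.

Lemma shift_on_close L v p h w c : v \notin L -> Rabs (c - p v) <= Rabs (h * w v) ->
  forall u, Rabs (upd (shift_on L p h w) v c u - p u) <= Rabs h * \sum_(x <- v :: L) Rabs (w x).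
Proof.
move=> vL cv u; set M := \sum_(y <- v :: L) Rabs (w y).
have M_ge0 : 0 <= M by apply: sum_ge0 => y; apply: Rabs_pos.
have hw_le x : x \in v :: L -> Rabs (h * w x) <= Rabs h * M.
  move=> xL; rewrite Rabs_mult; apply/Rmult_le_compat_l/term_le_sum => //; first exact: Rabs_pos.
  by move=> y; apply: Rabs_pos.
rewrite /upd /shift_on; case: eqP => [->|_]; first by apply: Rle_trans cv (hw_le _ (mem_head v L)).
case: ifP => uL; last first.
  by rewrite Rminus_diag Rabs_R0; apply: Rmult_le_pos (Rabs_pos h) M_ge0.
by rewrite (_ : p u + h * w u - p u = h * w u); [apply: hw_le; rewrite inE uL orbT | ring].
Qed.

(* Chain rule along the coordinates listed in [L], one coordinate at a time:
   the new coordinate contributes through the mean value theorem, and the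
   continuity of its partial derivative makes the intermediate point irrelevant. *)
Lemma derivable_shift_on n f w :
  (forall v, has_partial v f (Pd v f) /\ cont_upto n (Pd v f)) ->
  forall L p, uniq L ->
  derivable_pt_lim (fun t => f (shift_on L p t w)) 0 (\sum_(v <- L) w v * Pd v f p).
Proof.
move=> fC; elim=> [|v L IHL] p.
  move=> _; rewrite big_nil; suff -> : (fun t => f (shift_on [::] p t w)) = fun _ => f p.
    exact: derivable_pt_lim_const.
  by apply: functional_extensionality => t; congr f.
rewrite big_cons => /andP[vL uL] e e_gt0; have [fv Pdv_cont] := fC v.
have [d2 IH] := IHL p uL (e / 2) ltac:(lra).
have [d1 [d1_gt0 Pdv_close]] := @cont_upto_uniform n _ p _ Pdv_cont
  (sum_ge0 (v :: L) (fun u => Rabs_pos (w u))) (e / 2 / (Rabs (w v) + 1))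
  ltac:(apply: Rdiv_lt_0_compat; have := Rabs_pos (w v); lra).
have d_gt0 : 0 < Rmin d2 d1 by apply: Rmin_pos => //; apply: cond_pos.
exists (mkposreal _ d_gt0) => h h0 /= hd.
set q := shift_on L p h w; set S := \sum_(u <- L) w u * Pd u f p.
have qv : q v = p v by rewrite /q /shift_on (negbTE vL).
have [c [cv fc]] := increment_partial q (p v + h * w v) fv.
rewrite qv (_ : p v + h * w v - p v = h * w v) in cv fc; last by ring.
have := IH h h0 (Rlt_le_trans _ _ _ hd (Rmin_l _ _)).
rewrite !Rplus_0_l !shift_on0 shift_on_cons // -/q -/S.
have -> : (f (upd q v (p v + h * w v)) - f p) / h - (w v * Pd v f p + S)
    = w v * (Pd v f (upd q v c) - Pd v f p) + ((f q - f p) / h - S).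
  have -> : f (upd q v (p v + h * w v)) - f p = f (upd q v (p v + h * w v)) - f q + (f q - f p).
    by ring.
  by rewrite fc; field.
apply: Rabs_mul_add_lt.
exact: Pdv_close (Rlt_le_trans _ _ _ hd (Rmin_r _ _)) (shift_on_close vL cv).
Qed.

Definition DtotR (mu : 'I_m) f : Pt -> R :=
  fun p => Dlim (fun t => f (fun v => p v + t * wvec mu p v)) 0.

Lemma line_at0 p w : (fun v => p v + 0 * w v) = p.
Proof. by apply: functional_extensionality => v; ring. Qed.

Lemma DtotR_line mu f p l :
  derivable_pt_lim (fun t => f (fun v => p v + t * wvec mu p v)) 0 l -> DtotR mu f p = l.
Proof. exact: DlimE. Qed.

Lemma derivable_line_sum n N f mu p : smooth_upto n f -> (n <= N)%N ->
  derivable_pt_lim (fun t => f (fun v => p v + t * wvec mu p v)) 0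
    (\sum_(v <- vars N) wvec mu p v * Pd v f p).
Proof.
move=> fs nN; have fC v : has_partial v f (Pd v f) /\ cont_upto n (Pd v f).
  by have [fv [_ /(_ 0%N)]] := smooth_partial v fs.
have := derivable_shift_on (wvec mu p) fC p (uniq_vars_upto m Aset N).
suff -> : (fun t => f (shift_on (vars N) p t (wvec mu p))) =
          (fun t => f (fun v => p v + t * wvec mu p v)) by [].
apply: functional_extensionality => t; apply: (proj1 fs) => v vn.
by rewrite /shift_on mem_vars_upto (leq_trans vn nN).
Qed.

Lemma DtotRE n N f mu : smooth_upto n f -> (n <= N)%N ->
  DtotR mu f = fun p => \sum_(v <- vars N) wvec mu p v * Pd v f p.
Proof.
move=> fs nN; apply: functional_extensionality => p; apply: DtotR_line.
exact: derivable_line_sum mu p fs nN.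
Qed.

Lemma derivable_DtotR n f mu p : smooth_upto n f ->
  derivable_pt_lim (fun t => f (fun v => p v + t * wvec mu p v)) 0 (DtotR mu f p).
Proof. by move=> fs; rewrite (DtotRE mu fs (leqnn n)); apply: derivable_line_sum mu p fs _. Qed.

Lemma smooth_wvec n mu v : (ord v <= n)%N -> smooth_upto n.+1 (fun p => wvec mu p v).
Proof.
case: v => [nu|[a i]] vn /=; first exact: smooth_const.
by apply: (smooth_coord (w := inr (a, mshift mu i))); rewrite /= mabs_shift.
Qed.

Lemma smooth_DtotR n f mu : smooth_upto n f -> smooth_upto n.+1 (DtotR mu f).
Proof.
move=> fs; rewrite (DtotRE mu fs (leqnn n)).
apply: smooth_sum => v; rewrite mem_vars_upto => vn.
apply: smooth_mul; first exact: smooth_wvec.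
by apply: (smooth_mono (leqnSn n)); have [] := smooth_partial v fs.
Qed.

Lemma DtotR_const mu c : DtotR mu (fun _ => c) = fun _ => 0.
Proof. by apply: functional_extensionality => p; apply: Dlim_const. Qed.

Lemma DtotR_coord mu (w : V) : DtotR mu (fun p => p w) = fun p => wvec mu p w.
Proof.
apply: functional_extensionality => p; apply: DtotR_line.
have := derivable_pt_lim_plus _ _ _ _ _ (derivable_pt_lim_const (p w) 0)
  (derivable_pt_lim_scal _ (wvec mu p w) _ _ (derivable_pt_lim_id 0)).
by rewrite Rplus_0_l Rmult_1_r; apply: derivable_pt_lim_ext => t; rewrite /mult_real_fct Rmult_comm.
Qed.

Lemma DtotR_add n f g mu : smooth_upto n f -> smooth_upto n g ->
  DtotR mu (fun p => f p + g p) = fun p => DtotR mu f p + DtotR mu g p.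
Proof.
move=> fs gs; apply: functional_extensionality => p; apply: DtotR_line.
exact: derivable_pt_lim_plus (derivable_DtotR mu p fs) (derivable_DtotR mu p gs).
Qed.

Lemma DtotR_scal n c f mu : smooth_upto n f ->
  DtotR mu (fun p => c * f p) = fun p => c * DtotR mu f p.
Proof.
move=> fs; apply: functional_extensionality => p; apply: DtotR_line.
exact: derivable_pt_lim_scal (derivable_DtotR mu p fs).
Qed.

Lemma DtotR_mul n f g mu : smooth_upto n f -> smooth_upto n g ->
  DtotR mu (fun p => f p * g p) = fun p => DtotR mu f p * g p + f p * DtotR mu g p.
Proof.
move=> fs gs; apply: functional_extensionality => p; apply: DtotR_line.
have := derivable_pt_lim_mult _ _ _ _ _ (derivable_DtotR mu p fs) (derivable_DtotR mu p gs).
by rewrite line_at0.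
Qed.

Lemma DtotR_sum (T : eqType) n (s : seq T) (F : T -> Pt -> R) mu :
  (forall x, x \in s -> smooth_upto n (F x)) ->
  DtotR mu (fun p => \sum_(x <- s) F x p) = fun p => \sum_(x <- s) DtotR mu (F x) p.
Proof.
move=> Fs; apply: functional_extensionality => p; apply: DtotR_line.
by apply: derivable_pt_lim_sum => x xs; apply: derivable_DtotR mu p (Fs x xs).
Qed.

Lemma cont_upto_2d n g p u v : cont_upto n g ->
  Continuity.continuity_2d_pt (fun s t => g (upd (upd p u s) v t)) (p u) (p v).
Proof.
move=> gc e; have [d [d_gt0 gd]] := gc p e (cond_pos e).
exists (mkposreal d d_gt0) => s t /= su tv; rewrite !upd_id.
apply: gd => w _; rewrite /upd; case: eqP => [->|_] //; case: eqP => [->|_] //.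
by rewrite Rminus_diag Rabs_R0.
Qed.

Lemma has_partial_at2 u v g g' p s t : u != v -> has_partial u g g' ->
  derivable_pt_lim (fun s => g (upd (upd p u s) v t)) s (g' (upd (upd p u s) v t)).
Proof.
move=> uv gu.
have -> : (fun s => g (upd (upd p u s) v t)) = (fun s => g (upd (upd p v t) u s)).
  by apply: functional_extensionality => s'; rewrite updC.
by rewrite updC //; apply: has_partial_at.
Qed.

Lemma Pd_comm n f u v : smooth_upto n f -> Pd u (Pd v f) = Pd v (Pd u f).
Proof.
move=> fs; apply: functional_extensionality => p.
have [<-|uv] := eqVneq u v; first by [].
have [fu us] := smooth_partial u fs; have [fv vs] := smooth_partial v fs.
have [fuv _] := smooth_partial v us; have [fvu _] := smooth_partial u vs.
have cont g : smooth_upto n g ->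
    Continuity.continuity_2d_pt (fun s t => g (upd (upd p u s) v t)) (p u) (p v).
  by move=> [_ /(_ 0%N)]; apply: cont_upto_2d.
have := @schwarz_2d (fun s t => f (upd (upd p u s) v t))
  (fun s t => Pd u f (upd (upd p u s) v t)) (fun s t => Pd v f (upd (upd p u s) v t))
  (fun s t => Pd v (Pd u f) (upd (upd p u s) v t)) (fun s t => Pd u (Pd v f) (upd (upd p u s) v t))
  (p u) (p v).
rewrite !upd_id => -> //.
- by move=> s t; apply: has_partial_at2.
- by move=> s t; apply: has_partial_at.
- by move=> s t; apply: has_partial_at.
- by move=> s t; apply: has_partial_at2.
- by apply: cont; have [] := smooth_partial v us.
- by apply: cont; have [] := smooth_partial u vs.
Qed.

Definition Dwvec (mu nu : 'I_m) p (v : V) : R :=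
  if v is inr (a, i) then p (inr (a, mshift nu (mshift mu i))) else 0.

Lemma DtotR_wvec mu nu v : DtotR nu (fun p => wvec mu p v) = fun p => Dwvec mu nu p v.
Proof. by case: v => [x|[a i]]; [apply: DtotR_const | apply: DtotR_coord]. Qed.

Lemma DtotR_DtotR n f mu nu : smooth_upto n f ->
  DtotR nu (DtotR mu f) = fun p =>
    \sum_(v <- vars n) Dwvec mu nu p v * Pd v f p +
    \sum_(v <- vars n) \sum_(u <- vars n) wvec mu p v * wvec nu p u * Pd u (Pd v f) p.
Proof.
move=> fs; have smooth_terms v : v \in vars n ->
    smooth_upto n.+1 (fun p => wvec mu p v) /\ smooth_upto n.+1 (Pd v f).
  rewrite mem_vars_upto => vn; split; first exact: smooth_wvec.
  by apply: (smooth_mono (leqnSn n)); have [] := smooth_partial v fs.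
rewrite (DtotRE mu fs (leqnn n)) (DtotR_sum (n := n.+1)); last first.
  by move=> v /smooth_terms[ws Pds]; apply: smooth_mul.
apply: functional_extensionality => p; rewrite -big_split !big_seq; apply: eq_bigr => v vn.
have [ws Pds] := smooth_terms v vn; have [_ Pds'] := smooth_partial v fs.
rewrite (DtotR_mul _ ws Pds) DtotR_wvec (DtotRE nu Pds' (leqnn n)) big_distrr /=.
by congr (_ + _); apply: eq_bigr => u _; ring.
Qed.

Lemma DtotR_comm n f mu nu : smooth_upto n f -> DtotR nu (DtotR mu f) = DtotR mu (DtotR nu f).
Proof.
move=> fs; rewrite !(DtotR_DtotR _ _ fs); apply: functional_extensionality => p.
congr (_ + _); first by apply: eq_bigr => -[x|[a i]] _ //=; rewrite mshiftC.
rewrite exchange_big; apply: eq_bigr => u _; apply: eq_bigr => v _.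
by rewrite (Pd_comm _ _ fs); ring.
Qed.

End TotalDerivative.

Section Algebra.
Variables (m : nat) (Aset : finType) (cplx : bool).
Local Notation Fn := (Fn m Aset).
Local Notation inA := (inA cplx).
Local Notation zeroF := (@zeroF m Aset).
Implicit Types (F G : Fn) (mu nu : 'I_m).
Local Open Scope R_scope.

Definition scalF c F : Fn := fun p => (c * fst (F p), c * snd (F p)).

Lemma DtotE mu F :
  Dtot mu F = fun p => (DtotR mu (fun q => fst (F q)) p, DtotR mu (fun q => snd (F q)) p).
Proof. by []. Qed.

Lemma inA_common F G : inA F -> inA G -> exists n,
  [/\ smooth_upto n (fun p => fst (F p)), smooth_upto n (fun p => snd (F p)),
      smooth_upto n (fun p => fst (G p)) & smooth_upto n (fun p => snd (G p))].
Proof.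
move=> [n [Fr [Fi _]]] [n' [Gr [Gi _]]]; exists (maxn n n').
by split; [move: Fr | move: Fi | move: Gr | move: Gi];
  apply: smooth_mono; rewrite ?leq_maxl ?leq_maxr.
Qed.

Lemma inA_zero : inA zeroF.
Proof. by exists 0%N; split; [|split]; try apply: smooth_const. Qed.

Lemma inA_add F G : inA F -> inA G -> inA (addF F G).
Proof.
move=> AF AG; have [n [Fr Fi Gr Gi]] := inA_common AF AG.
exists n; split; [|split]; try exact: smooth_add.
move=> real p; rewrite /addF /=.
by have [_ [_ [_ /(_ real p) ->]]] := AF; have [_ [_ [_ /(_ real p) ->]]] := AG; ring.
Qed.

Lemma inA_sumF (T : eqType) (s : seq T) (H : T -> Fn) :
  (forall x, x \in s -> inA (H x)) -> inA (sumF [seq H x | x <- s]).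
Proof.
elim: s => [|x s IHs] Hs /=; first exact: inA_zero.
apply: inA_add; first by apply: Hs; rewrite mem_head.
by apply: IHs => y ys; apply: Hs; rewrite inE ys orbT.
Qed.

Lemma inA_scal c F : inA F -> inA (scalF c F).
Proof.
move=> [n [Fr [Fi Freal]]]; exists n.
split; [|split]; try by apply: smooth_mul => //; apply: smooth_const.
by move=> real p; rewrite /scalF /= Freal //; ring.
Qed.

Lemma inA_nmul k F : inA F -> inA (nmulF k F).
Proof. exact: inA_scal. Qed.

Lemma addF_scalN1 F G : addF F (scalF (-1) G) = subF F G.
Proof.
by apply: functional_extensionality => p; rewrite /addF /scalF /subF /=; congr pair; ring.
Qed.

Lemma subF_eq0 F G : subF F G = zeroF -> F = G.
Proof.
move=> FG; apply: functional_extensionality => p; move: (congr1 (fun H => H p) FG).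
by rewrite /subF /zeroF; case: (F p) (G p) => [x y] [x' y'] /= [? ?]; congr pair; lra.
Qed.

Lemma inA_sub F G : inA F -> inA G -> inA (subF F G).
Proof. by move=> AF AG; rewrite -addF_scalN1; apply/inA_add/inA_scal. Qed.

Lemma inA_Dtot mu F : inA F -> inA (Dtot mu F).
Proof.
move=> [n [Fr [Fi Freal]]]; exists n.+1; rewrite DtotE /=.
split; [exact: smooth_DtotR Fr | split; [exact: smooth_DtotR Fi | move=> real p]].
suff -> : (fun q => snd (F q)) = (fun _ => 0) by rewrite DtotR_const.
by apply: functional_extensionality => q; apply: Freal.
Qed.

Lemma Dtot_zero mu : Dtot mu zeroF = zeroF.
Proof. by rewrite DtotE /zeroF /= DtotR_const. Qed.

Lemma Dtot_add mu F G : inA F -> inA G -> Dtot mu (addF F G) = addF (Dtot mu F) (Dtot mu G).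
Proof.
move=> AF AG; have [n [Fr Fi Gr Gi]] := inA_common AF AG.
by rewrite !DtotE /addF /= (DtotR_add mu Fr Gr) (DtotR_add mu Fi Gi).
Qed.

Lemma Dtot_scal mu c F : inA F -> Dtot mu (scalF c F) = scalF c (Dtot mu F).
Proof.
move=> [n [Fr [Fi _]]].
by rewrite !DtotE /scalF /= (DtotR_scal c mu Fr) (DtotR_scal c mu Fi).
Qed.

Lemma Dtot_comm mu nu F : inA F -> Dtot nu (Dtot mu F) = Dtot mu (Dtot nu F).
Proof.
move=> [n [Fr [Fi _]]].
by rewrite !DtotE /= (DtotR_comm mu nu Fr) (DtotR_comm mu nu Fi).
Qed.

Lemma inA_iter mu k F : inA F -> inA (iter k (Dtot mu) F).
Proof. by move=> AF; elim: k => [|k IHk] //=; apply: inA_Dtot. Qed.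

Lemma Dtot_iter mu nu k F : inA F ->
  Dtot mu (iter k (Dtot nu) F) = iter k (Dtot nu) (Dtot mu F).
Proof. by move=> AF; elim: k => [|k IHk] //=; rewrite -IHk Dtot_comm //; apply: inA_iter. Qed.

Definition Dseq (s : seq 'I_m) (j : MI m) F : Fn :=
  foldr (fun mu G => iter (j mu) (Dtot mu) G) F s.

Lemma inA_Dseq s j F : inA F -> inA (Dseq s j F).
Proof. by move=> AF; elim: s => [|mu s IHs] //=; apply: inA_iter. Qed.

Lemma Dseq_shift_notin s j mu F : mu \notin s -> Dseq s (mshift mu j) F = Dseq s j F.
Proof.
elim: s => [|nu s IHs] //=; rewrite inE negb_or => /andP[mu_nu mu_s].
by rewrite IHs // ffunE eq_sym (negbTE mu_nu) addn0.
Qed.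

Lemma Dtot_Dseq s j mu F : uniq s -> mu \in s -> inA F ->
  Dtot mu (Dseq s j F) = Dseq s (mshift mu j) F.
Proof.
elim: s => [|nu s IHs] //= /andP[nu_s us]; rewrite inE => /orP[/eqP nu_mu | mu_s] AF.
  by subst nu; rewrite ffunE eqxx addn1 /= Dseq_shift_notin.
rewrite Dtot_iter; last exact: inA_Dseq.
rewrite IHs // ffunE.
by case: eqP => [nu_mu|_]; [rewrite nu_mu mu_s in nu_s | rewrite addn0].
Qed.

Lemma inA_Dj j F : inA F -> inA (Dj j F).
Proof. exact: inA_Dseq. Qed.

Lemma Dtot_Dj mu j F : inA F -> Dtot mu (Dj j F) = Dj (mshift mu j) F.
Proof. exact: Dtot_Dseq (enum_uniq _) (mem_enum _ mu). Qed.

Lemma Dj0 F : Dj [ffun _ => 0%N] F = F.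
Proof. by rewrite /Dj; elim: (enum 'I_m) => [|mu s IHs] //=; rewrite ffunE. Qed.

End Algebra.

Section VerticalFields.
Variables (m : nat) (Aset : finType) (cplx : bool).
Local Notation Fn := (Fn m Aset).
Local Notation VF := (VF m Aset).
Local Notation MI := (MI m).
Local Notation inA := (inA cplx).
Local Notation E := (Eshift cplx).
Local Notation zeroF := (@zeroF m Aset).
Implicit Types (z w : VF) (phi : Aset -> Fn) (mu : 'I_m) (i k : MI).
Local Open Scope R_scope.

Definition zeroV : VF := fun _ _ => zeroF.
Definition addV z w : VF := fun a i => addF (z a i) (w a i).
Definition scalV c z : VF := fun a i => scalF c (z a i).

Lemma VF_ext z w : (forall a i p, z a i p = w a i p) -> z = w.
Proof. by move=> zw; do 3!apply: functional_extensionality => ?; apply: zw. Qed.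

Lemma E0 z : E 0 z <-> z = zeroV.
Proof. by split=> [z0|-> //]; apply: VF_ext. Qed.

Lemma commD_zero mu : commD mu zeroV = zeroV.
Proof.
by apply: VF_ext => a i p; rewrite /commD Dtot_zero /subF /zeroV /zeroF /=; congr pair; ring.
Qed.

Lemma commD_add mu z w : inDV cplx z -> inDV cplx w ->
  commD mu (addV z w) = addV (commD mu z) (commD mu w).
Proof.
move=> Az Aw; apply: VF_ext => a i p.
by rewrite /commD /addV (Dtot_add mu (Az a i) (Aw a i)) /subF /addF /=; congr pair; ring.
Qed.

Lemma commD_scal mu c z : inDV cplx z -> commD mu (scalV c z) = scalV c (commD mu z).
Proof.
move=> Az; apply: VF_ext => a i p.
by rewrite /commD /scalV (Dtot_scal mu c (Az a i)) /subF /scalF /=; congr pair; ring.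
Qed.

Lemma E_zero q : E q zeroV.
Proof.
elim: q => [|q IHq] //=; split=> [a i|mu]; first exact: inA_zero.
by rewrite commD_zero.
Qed.

Lemma E_add q z w : E q z -> E q w -> E q (addV z w).
Proof.
elim: q z w => [|q IHq] z w /=.
  move=> /E0-> /E0->; apply/E0/VF_ext => a i p.
  by rewrite /addV /addF /zeroV /zeroF /=; congr pair; ring.
move=> [Az zD] [Aw wD]; split=> [a i|mu]; first exact: inA_add.
by rewrite commD_add //; apply: IHq.
Qed.

Lemma E_scal q c z : E q z -> E q (scalV c z).
Proof.
elim: q z => [|q IHq] z /=.
  move=> /E0->; apply/E0/VF_ext => a i p.
  by rewrite /scalV /scalF /zeroV /zeroF /=; congr pair; ring.
move=> [Az zD]; split=> [a i|mu]; first exact: inA_scal.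
by rewrite commD_scal //; apply: IHq.
Qed.

Lemma E_succ q z : E q z -> E q.+1 z.
Proof.
elim: q z => [|q IHq] z /=; last by move=> [Az zD]; split=> // mu; apply: IHq.
by move=> /E0->; apply: (E_zero 1).
Qed.

Lemma E_mono q q' z : (q <= q')%N -> E q z -> E q' z.
Proof. by move=> /subnK <-; elim: (q' - q)%N => [|d IHd] // /IHd /E_succ. Qed.

Lemma E_sumF (T : eqType) q (s : seq T) (Z : T -> VF) :
  (forall x, x \in s -> E q (Z x)) -> E q (fun a i => sumF [seq Z x a i | x <- s]).
Proof.
elim: s => [|x s IHs] ZE /=; first exact: E_zero.
apply: (E_add (ZE x (mem_head x s))); apply: IHs => y ys.
by apply: ZE; rewrite inE ys orbT.
Qed.

Lemma commD_eps phi k mu : (forall a, inA (phi a)) ->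
  commD mu (eps k phi) = if (0 < k mu)%N then scalV (-1) (eps (mdec mu k) phi) else zeroV.
Proof.
move=> Aphi; apply: VF_ext => a i p.
have Dtot_term j c : Dtot mu (nmulF c (Dj j (phi a))) = nmulF c (Dj (mshift mu j) (phi a)).
  by rewrite (Dtot_scal mu _ (inA_Dj j (Aphi a))) (Dtot_Dj mu j (Aphi a)).
rewrite /commD /eps; case: ltnP => [k_gt0|k0]; rewrite /scalV /zeroV /= ?mle_dec.
  have [ki|ki] := boolP (mle k i).
    rewrite (mle_shift mu ki) Dtot_term -(msub_shift mu ki) (msub_dec k_gt0 (mle_shift mu ki)).
    by rewrite (mbinom_pascal i k_gt0) /scalF /nmulF /subF /= plus_INR; congr pair; ring.
  rewrite Dtot_zero; case: ifP => [ki'|_]; last by rewrite /scalF /subF /zeroF /=; congr pair; ring.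
  rewrite (msub_dec k_gt0 ki') (mbinom_pascal i k_gt0) (mbinom_small ki) add0n.
  by rewrite /scalF /nmulF /subF /zeroF /=; congr pair; ring.
have {}k0 : k mu = 0%N by apply/eqP; rewrite -leqn0.
rewrite (mle_shift0 i k0) (mbinom_shift0 i k0); case: ifP => [ki|_].
  by rewrite Dtot_term -(msub_shift mu ki) /nmulF /subF /zeroF /=; congr pair; ring.
by rewrite Dtot_zero /subF /zeroF /=; congr pair; ring.
Qed.

Lemma inDV_eps k phi : (forall a, inA (phi a)) -> inDV cplx (eps k phi).
Proof.
move=> Aphi a i; rewrite /eps; case: ifP => _; last exact: inA_zero.
by apply/inA_nmul/inA_Dj.
Qed.

Lemma E_eps k phi : (forall a, inA (phi a)) -> E (mabs k).+1 (eps k phi).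
Proof.
move=> Aphi; move: {2}(mabs k) (erefl (mabs k)) => n; elim: n k => [|n IHn] k k_n.
all: split=> [|mu]; first exact: inDV_eps.
  rewrite commD_eps // (_ : (0 < k mu)%N = false); first exact: E_zero.
  by apply/negbTE; rewrite -leqNgt -k_n coord_le_mabs.
rewrite commD_eps //; case: ifP => [k_gt0|_]; last exact: E_zero.
by apply: E_scal; rewrite (mabs_dec k_gt0) in k_n *; apply: IHn; case: k_n.
Qed.

Lemma Ecal_sumEps q (phi : MI -> Aset -> Fn) :
  (forall k a, (mabs k <= q)%N -> inA (phi k a)) -> Ecal cplx q (sumEps q phi).
Proof.
move=> Aphi; apply: E_sumF => k; rewrite mem_mis => kq.
by apply: (E_mono _ (E_eps _ _)) => // a; apply: Aphi.
Qed.

Lemma zero_of_low_orders q z : (forall mu, commD mu z = zeroV) ->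
  (forall a i, (mabs i <= q)%N -> z a i = zeroF) -> z = zeroV.
Proof.
move=> zD zq; apply: functional_extensionality => a; apply: functional_extensionality => i.
move: {2}(mabs i) (erefl (mabs i)) => n; elim/ltn_ind: n i => n IHn i i_n.
have [nq|qn] := leqP n q; first by apply: zq; rewrite i_n.
have [mu i_gt0] : exists mu, (0 < i mu)%N.
  by apply: mabs_gt0_coord; rewrite i_n; apply: leq_ltn_trans (leq0n q) qn.
have z_dec : z a (mdec mu i) = zeroF by apply: (IHn _ _ _ erefl); rewrite -i_n (mabs_dec i_gt0).
move: (congr1 (fun w => w a (mdec mu i)) (zD mu)).
by rewrite /commD z_dec Dtot_zero mdecK // => /subF_eq0 <-.
Qed.

Lemma E_vanish q z : E q.+1 z -> (forall a i, (mabs i <= q)%N -> z a i = zeroF) -> z = zeroV.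
Proof.
elim: q z => [|q IHq] z [_ zD] zq; apply: (zero_of_low_orders _ zq) => mu; first exact/E0/zD.
apply: IHq (zD mu) _ => a i iq.
rewrite /commD (zq a i (leq_trans iq (leqnSn q))) (zq a (mshift mu i)); last by rewrite mabs_shift.
rewrite Dtot_zero; apply: functional_extensionality => p.
by rewrite /subF /zeroF /=; congr pair; ring.
Qed.

End VerticalFields.

Section Triangular.
Variables (m : nat) (Aset : finType) (q : nat).
Local Notation Fn := (Fn m Aset).
Local Notation MI := (MI m).
Implicit Types (phi psi : MI -> Aset -> Fn) (F G H : Fn) (k l : MI).
Local Open Scope R_scope.

Lemma addFI F G H : addF F H = addF G H -> F = G.
Proof.
move=> FGH; apply: functional_extensionality => p; move: (congr1 (fun K => K p) FGH).
by rewrite /addF; case: (F p) (G p) => [x y] [x' y'] /= [? ?]; congr pair; lra.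
Qed.

Lemma sumF_rem (T : eqType) (s : seq T) (K : T -> Fn) x : uniq s -> x \in s ->
  sumF [seq K y | y <- s] = addF (K x) (sumF [seq K y | y <- [seq y <- s | y != x]]).
Proof.
elim: s => [|y s IHs] //= /andP[ys us]; rewrite inE => /orP[/eqP-> | xs].
  rewrite eqxx /=; congr (addF _ (sumF (map _ _))); apply/esym/all_filterP/allP => z zs.
  by apply: contraNneq ys => <-.
rewrite (IHs us xs) ifT; last by apply: contraNneq ys => ->.
by apply: functional_extensionality => p; rewrite /addF /=; congr pair; ring.
Qed.

Lemma eps_diag k (phi : Aset -> Fn) a : eps k phi a k = phi a.
Proof.
apply: functional_extensionality => p.
by rewrite /eps mle_refl mbinomii msubii Dj0 /nmulF /=; case: (phi a p) => x y /=; congr pair; ring.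
Qed.

Definition offdiag phi a k : Fn :=
  sumF [seq eps l (phi l) a k | l <- [seq l <- mis m q | l != k]].

Lemma sumEps_diag phi a k : (mabs k <= q)%N ->
  sumEps q phi a k = addF (phi k a) (offdiag phi a k).
Proof. by move=> kq; rewrite /sumEps (@sumF_rem _ _ _ k (uniq_mis m q)) ?mem_mis // eps_diag. Qed.

(* [eps l phi] has no coefficient of index [k] unless [mle l k]. *)
Lemma offdiag_lower phi psi a k : (forall l, (mabs l < mabs k)%N -> phi l = psi l) ->
  offdiag phi a k = offdiag psi a k.
Proof.
move=> phi_psi; congr sumF; apply/eq_in_map => l; rewrite mem_filter => /andP[lk _].
by rewrite /eps; case: ifP => // lki; rewrite phi_psi // mle_mabs_lt.
Qed.

Lemma sumEps_inj phi psi : (forall a i, sumEps q phi a i = sumEps q psi a i) ->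
  forall k, (mabs k <= q)%N -> phi k = psi k.
Proof.
move=> phi_psi k; move: {2}(mabs k) (erefl (mabs k)) => n.
elim/ltn_ind: n k => n IHn k k_n kq; apply: functional_extensionality => a.
move: (phi_psi a k); rewrite !sumEps_diag // (@offdiag_lower phi psi) => [/addFI // | l lk].
by apply: (IHn _ _ _ erefl); rewrite -?k_n // (leq_trans (ltnW lk)).
Qed.

End Triangular.

Section Existence.
Variables (m : nat) (Aset : finType) (cplx : bool) (q : nat) (z : VF m Aset).
Local Notation Fn := (Fn m Aset).
Local Notation MI := (MI m).
Hypothesis zE : Ecal cplx q z.
Local Open Scope R_scope.

(* Recursion on [mabs k] with fuel: [solve n k] is final once [mabs k < n]. *)
Fixpoint solve n : MI -> Aset -> Fn :=
  if n is n'.+1 then fun k a => subF (z a k) (offdiag q (solve n') a k)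
  else fun _ _ => @zeroF m Aset.

Lemma solve_stable n k : (mabs k < n)%N -> solve n.+1 k = solve n k.
Proof.
elim: n k => [|n IHn] k // kn; apply: functional_extensionality => a /=.
by congr subF; apply: offdiag_lower => l lk; apply: IHn (leq_trans lk kn).
Qed.

Definition phi_of k : Aset -> Fn := solve (mabs k).+1 k.

Lemma solveE n k : (mabs k < n)%N -> solve n k = phi_of k.
Proof.
move=> kn; rewrite /phi_of -(subnKC kn).
elim: (n - (mabs k).+1)%N => [|d IHd]; rewrite ?addn0 //.
by rewrite addnS solve_stable ?IHd // ltnS leq_addr.
Qed.

Lemma inA_solve n k a : inA cplx (solve n k a).
Proof.
elim: n k a => [|n IHn] k a /=; first exact: inA_zero.
apply: inA_sub (proj1 zE a k) _; apply: inA_sumF => l _.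
by apply: inDV_eps => b; apply: IHn.
Qed.

Lemma sumEps_phi_of a k : (mabs k <= q)%N -> sumEps q phi_of a k = z a k.
Proof.
move=> kq; rewrite sumEps_diag // {1}/phi_of /=.
rewrite (@offdiag_lower _ _ _ phi_of (solve (mabs k))); last by move=> l lk; rewrite solveE.
apply: functional_extensionality => p.
by rewrite /addF /subF /=; case: (z a k p) => x y /=; congr pair; ring.
Qed.

Lemma sumEps_phi_ofE : z = sumEps q phi_of.
Proof.
have sE : Ecal cplx q (sumEps q phi_of) by apply: Ecal_sumEps => k a _; apply: inA_solve.
have diff0 : addV z (scalV (-1) (sumEps q phi_of)) = @zeroV m Aset.
  apply: E_vanish (E_add zE (E_scal (-1) sE)) _ => a i iq.
  rewrite /addV /scalV sumEps_phi_of //; apply: functional_extensionality => p.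
  by rewrite /addF /scalF /zeroF /=; congr pair; ring.
apply: VF_ext => a i p; move: (congr1 (fun w => w a i) diff0).
by rewrite /addV /scalV addF_scalN1 => /subF_eq0 ->.
Qed.

End Existence.

Theorem mainTheorem17 (cplx : bool) (m : nat) (Aset : finType) (q : nat) :
  (forall z : VF m Aset,
     Ecal cplx q z <->
     exists phi : MI m -> Aset -> Fn m Aset,
       (forall k a, mabs k <= q -> inA cplx (phi k a)) /\
       (forall a i p, z a i p = sumEps q phi a i p))
  /\
  (forall phi psi : MI m -> Aset -> Fn m Aset,
     (forall k a, mabs k <= q -> inA cplx (phi k a) /\ inA cplx (psi k a)) ->
     (forall a i p, sumEps q phi a i p = sumEps q psi a i p) ->
     forall k a p, mabs k <= q -> phi k a p = psi k a p).
Proof.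
split=> [z|phi psi _ phi_psi k a p kq]; last first.
  rewrite (sumEps_inj (phi := phi) (psi := psi) _ kq) // => b i.
  exact/functional_extensionality/phi_psi.
split=> [zE|[phi [Aphi zphi]]].
  exists (phi_of q z); split=> [k a _|a i p]; first exact: inA_solve zE _ k a.
  by rewrite {1}(sumEps_phi_ofE zE).
by rewrite (VF_ext zphi); apply: Ecal_sumEps.
Qed.
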